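(* For every positive integer $n$ there exist a present-bias parameter $b>1$, an instance $G$ with $O(n)$ vertices, and a set $S$ of $2^n$ distinct rewards such that for each reward $R\in S$ placed at $t$ the sophisticated agent (with abandonment) reaches $t$, and the paths it traverses for different rewards in $S$ are pairwise distinct. In particular the number of distinct paths taken as the reward varies is exponential in the size of the graph.
   Context: An instance is a finite directed acyclic graph $G=(V,E)$ with nonnegative edge costs $c(u,v)$, start node $s$ and target node $t$, where $t$ is the unique node with no outgoing edges. Sophisticated agent with bias $b$ and reward $R$ at $t$, which may abandon: process nodes in reverse topological order; $t$ is never abandoned and $C_R(t)=0$. For $u\neq t$, among out-edges $(u,v)$ with $v$ not abandoned let $P(u,v)=b\,c(u,v)+C_R(v)$; if none exists or all have $P(u,v)>R$, $u$ is abandoned; otherwise the agent at $u$ moves to $v^*(u)\in\arg\min P(u,v)$ and $C_R(u)=c(u,v^*(u))+C_R(v^*(u))$. The agent reaches $t$ iff $s$ is not abandoned, following $s,v^*(s),\dots,t$. *)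

From Stdlib Require Import Reals List Relations.
Import ListNotations.
Open Scope R_scope.

(* An instance: vertices are the naturals 0 .. nV-1, a directed edge
   relation, a cost function (meaningful on edges), start s and target t. *)
Record instance := Instance {
  nV   : nat;
  edge : nat -> nat -> Prop;
  cost : nat -> nat -> R;
  src  : nat;
  tgt  : nat
}.

Definition well_formed (G : instance) : Prop :=
  (forall u v, edge G u v -> (u < nV G)%nat /\ (v < nV G)%nat) /\
  (forall u v, edge G u v -> 0 <= cost G u v) /\
  (forall u, ~ clos_trans nat (edge G) u u) /\
  (src G < nV G)%nat /\ (tgt G < nV G)%nat /\
  (forall v, ~ edge G (tgt G) v) /\
  (forall u, (u < nV G)%nat -> u <> tgt G -> exists v, edge G u v).

(* [agent_run G b R aband next C] : the data (abandoned set, chosen successor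
   v*(u), perceived-cost C_R(u)) is a valid outcome of the backward-induction
   process of the sophisticated agent with bias b and reward R (with
   abandonment).  Since each node's data depends only on its successors, this
   fixed-point specification is exactly the reverse-topological-order
   procedure, with an arbitrary choice among minimizers of P(u,.). *)
Definition agent_run (G : instance) (b Rw : R)
    (aband : nat -> Prop) (next : nat -> nat) (C : nat -> R) : Prop :=
  ~ aband (tgt G) /\ C (tgt G) = 0 /\
  forall u, (u < nV G)%nat -> u <> tgt G ->
    let P := fun v => b * cost G u v + C v in
    (aband u <-> (forall v, edge G u v -> ~ aband v -> P v > Rw)) /\
    (~ aband u ->
       edge G u (next u) /\ ~ aband (next u) /\
       (forall v, edge G u v -> ~ aband v -> P (next u) <= P v) /\
       C u = cost G u (next u) + C (next u)).

Inductive follows (next : nat -> nat) (t : nat) : nat -> list nat -> Prop :=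
  | follows_end : follows next t t [t]
  | follows_step : forall u p, u <> t -> follows next t (next u) p ->
      follows next t u (u :: p).

From Stdlib Require Import Reals List Relations.
From Stdlib Require Import Arith Bool Lia FinFun.
Import ListNotations.
Open Scope R_scope.

(* Bias 2 on a ladder.  Between chain vertices i and i+1 there are two routes:
   the chain edge (cost 4*2^i) and a detour through a middle vertex (costs 2^i,
   then 5*2^i).  Seen from i, the bias falls only on the first edge, so the
   detour is perceived as 2 + 5 = 7 units of 2^i against 8 for the chain, and
   the agent takes it whenever the middle vertex is not abandoned; seen from the
   middle vertex the detour is perceived as 10 units.  With reward
   4*2^n + 2k + 1 the middle vertex of rung i is abandoned exactly when bit i
   of k is 0, whereas the chain edge stays affordable at every rung.  Hence 0 is
   never abandoned and the path from 0 spells out k in binary. *)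

Section AgentRun.
Variables (G : instance) (b Rw : R) (ab : nat -> Prop) (nx : nat -> nat) (C : nat -> R).
Hypothesis run : agent_run G b Rw ab nx C.

Lemma run_not_abandoned u v :
  (u < nV G)%nat -> u <> tgt G -> edge G u v -> ~ ab v ->
  b * cost G u v + C v <= Rw -> ~ ab u.
Proof.
  intros Hu Ht Huv Hv Hle Hab.
  destruct run as [_ [_ Hrun]].
  apply (Rle_not_lt _ _ Hle), (proj1 (proj1 (Hrun u Hu Ht)) Hab v Huv Hv).
Qed.

Lemma run_abandoned u :
  (u < nV G)%nat -> u <> tgt G ->
  (forall v, edge G u v -> ~ ab v -> b * cost G u v + C v > Rw) -> ab u.
Proof.
  intros Hu Ht Hall. destruct run as [_ [_ Hrun]].
  exact (proj2 (proj1 (Hrun u Hu Ht)) Hall).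
Qed.

Lemma run_next u :
  (u < nV G)%nat -> u <> tgt G -> ~ ab u ->
  edge G u (nx u) /\ ~ ab (nx u) /\ C u = cost G u (nx u) + C (nx u).
Proof.
  intros Hu Ht Hab. destruct run as [_ [_ Hrun]].
  destruct (proj2 (Hrun u Hu Ht) Hab) as [He [Hn [_ HC]]]. auto.
Qed.

Lemma run_next_optimal u v :
  (u < nV G)%nat -> u <> tgt G -> ~ ab u -> edge G u v -> ~ ab v ->
  b * cost G u (nx u) + C (nx u) <= b * cost G u v + C v.
Proof.
  intros Hu Ht Hab. destruct run as [_ [_ Hrun]].
  exact (proj1 (proj2 (proj2 (proj2 (Hrun u Hu Ht) Hab))) v).
Qed.

End AgentRun.

Arguments run_not_abandoned {G b Rw ab nx C}.
Arguments run_abandoned {G b Rw ab nx C}.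
Arguments run_next {G b Rw ab nx C}.
Arguments run_next_optimal {G b Rw ab nx C}.

Definition top (n i : nat) : nat := (n + 1 + i)%nat.

Definition ladder_edge (n u v : nat) : Prop :=
  ((u < n)%nat /\ (v = S u \/ v = top n u)) \/
  ((n < u)%nat /\ (u < 2 * n + 1)%nat /\ v = (u - n)%nat).

Definition ladder_cost (n u v : nat) : nat :=
  if Nat.leb u n then (if Nat.eqb v (S u) then 4 * 2 ^ u else 2 ^ u)%nat
  else (5 * 2 ^ (u - n - 1))%nat.

Definition ladder (n : nat) : instance :=
  Instance (2 * n + 1) (ladder_edge n) (fun u v => INR (ladder_cost n u v)) 0 n.

Lemma ladder_edge_bottom n i v :
  (i < n)%nat -> ladder_edge n i v <-> v = S i \/ v = top n i.
Proof. unfold ladder_edge, top; lia. Qed.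

Lemma ladder_edge_top n i v :
  (i < n)%nat -> ladder_edge n (top n i) v <-> v = S i.
Proof. unfold ladder_edge, top; lia. Qed.

Lemma ladder_cost_chain n i : (i < n)%nat -> ladder_cost n i (S i) = (4 * 2 ^ i)%nat.
Proof.
  intro Hi; unfold ladder_cost.
  destruct (Nat.leb_spec i n); [|lia]. now rewrite Nat.eqb_refl.
Qed.

Lemma ladder_cost_up n i : (i < n)%nat -> ladder_cost n i (top n i) = (2 ^ i)%nat.
Proof.
  intro Hi; unfold ladder_cost, top.
  destruct (Nat.leb_spec i n); [|lia].
  destruct (Nat.eqb_spec (n + 1 + i) (S i)); [lia|reflexivity].
Qed.

Lemma ladder_cost_down n i : ladder_cost n (top n i) (S i) = (5 * 2 ^ i)%nat.
Proof.
  unfold ladder_cost, top.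
  destruct (Nat.leb_spec (n + 1 + i) n); [lia|].
  now replace (n + 1 + i - n - 1)%nat with i by lia.
Qed.

Definition ladder_rank (n u : nat) : nat :=
  if Nat.leb u n then (2 * u)%nat else (2 * (u - n - 1) + 1)%nat.

Lemma ladder_rank_edge n u v : ladder_edge n u v -> (ladder_rank n u < ladder_rank n v)%nat.
Proof.
  unfold ladder_rank, ladder_edge, top; intros [[H [-> | ->]] | [H1 [H2 ->]]];
  repeat match goal with |- context [Nat.leb ?a ?b] => destruct (Nat.leb_spec a b) end; lia.
Qed.

Lemma ladder_acyclic n u : ~ clos_trans nat (ladder_edge n) u u.
Proof.
  enough (Hrank : forall x y, clos_trans nat (ladder_edge n) x y ->
                    (ladder_rank n x < ladder_rank n y)%nat)
    by (intro Hc; apply Hrank in Hc; lia).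
  intros x y Hc; induction Hc; [now apply ladder_rank_edge | lia].
Qed.

Lemma ladder_well_formed n : well_formed (ladder n).
Proof.
  unfold well_formed, ladder; cbn [nV edge cost src tgt].
  split; [unfold ladder_edge, top; lia|].
  split; [intros; apply pos_INR|].
  split; [apply ladder_acyclic|].
  split; [lia|]. split; [lia|].
  split; [unfold ladder_edge; lia|].
  intros u Hu Hun. destruct (Nat.lt_ge_cases u n).
  - exists (S u); unfold ladder_edge; auto.
  - exists (u - n)%nat; unfold ladder_edge; lia.
Qed.

Lemma mod_pow2_succ k i :
  (k mod 2 ^ S i = k mod 2 ^ i + 2 ^ i * Nat.b2n (Nat.testbit k i))%nat.
Proof.
  rewrite Nat.testbit_spec', Nat.pow_succ_r', Nat.mul_comm. apply Nat.Div0.mod_mul_r.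
Qed.

Lemma testbit_inj_lt n k1 k2 : (k1 < 2 ^ n)%nat -> (k2 < 2 ^ n)%nat ->
  (forall i, (i < n)%nat -> Nat.testbit k1 i = Nat.testbit k2 i) -> k1 = k2.
Proof.
  intros H1 H2 Heq. apply Nat.bits_inj. intro i.
  destruct (Nat.lt_ge_cases i n) as [Hi | Hi]; [now apply Heq|].
  rewrite <- (Nat.mod_small k1 (2 ^ n)), <- (Nat.mod_small k2 (2 ^ n)) by assumption.
  now rewrite !Nat.mod_pow2_bits_high.
Qed.

Definition reward (n k : nat) : R := INR (4 * 2 ^ n + 2 * k + 1).

(* Closed form of sum_(i <= j < n) (4 + 2 * bit j k) * 2^j, the agent's actual
   cost from bottom vertex i to the target. *)
Definition cost_to_go (n k i : nat) : nat :=
  (4 * 2 ^ n + 2 * k - (4 * 2 ^ i + 2 * (k mod 2 ^ i)))%nat.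

Lemma cost_to_go_spec n k i : (i <= n)%nat ->
  (cost_to_go n k i + 4 * 2 ^ i + 2 * (k mod 2 ^ i) = 4 * 2 ^ n + 2 * k)%nat.
Proof.
  intro Hi. unfold cost_to_go.
  assert ((2 ^ i <= 2 ^ n)%nat) by (apply Nat.pow_le_mono_r; lia).
  assert ((k mod 2 ^ i <= k)%nat) by apply Nat.Div0.mod_le.
  lia.
Qed.

Lemma cost_to_go_succ_spec n k i : (i < n)%nat ->
  (cost_to_go n k (S i) + (8 + 2 * Nat.b2n (Nat.testbit k i)) * 2 ^ i
     + 2 * (k mod 2 ^ i) = 4 * 2 ^ n + 2 * k)%nat.
Proof.
  intro Hi. pose proof (cost_to_go_spec n k (S i) Hi) as H.
  rewrite mod_pow2_succ, Nat.pow_succ_r' in H. lia.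
Qed.

Lemma mod_pow2_lt k i : (k mod 2 ^ i < 2 ^ i)%nat.
Proof. apply Nat.mod_upper_bound, Nat.pow_nonzero; lia. Qed.

Lemma perceived_INR x y : INR 2 * INR x + INR y = INR (2 * x + y).
Proof. now rewrite plus_INR, mult_INR. Qed.

Section LadderRun.
Variables (n k : nat) (ab : nat -> Prop) (nx : nat -> nat) (C : nat -> R).
Hypothesis k_lt : (k < 2 ^ n)%nat.
Hypothesis run : agent_run (ladder n) (INR 2) (reward n k) ab nx C.

Section Rung.
Variable i : nat.
Hypothesis i_lt : (i < n)%nat.
Hypothesis succ_kept : ~ ab (S i).
Hypothesis succ_cost : C (S i) = INR (cost_to_go n k (S i)).

Lemma ladder_top_abandoned : Nat.testbit k i = false -> ab (top n i).
Proof.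
  intro Hb. pose proof (cost_to_go_succ_spec n k i i_lt) as Hbudget.
  pose proof (mod_pow2_lt k i). rewrite Hb in Hbudget; cbn [Nat.b2n] in Hbudget.
  apply (run_abandoned run); cbn; [unfold top; lia | unfold top; lia |].
  intros v Hv _. apply ladder_edge_top in Hv as ->; [|assumption].
  rewrite ladder_cost_down, succ_cost, perceived_INR.
  apply lt_INR. lia.
Qed.

Lemma ladder_top_run : Nat.testbit k i = true ->
  ~ ab (top n i) /\ nx (top n i) = S i /\
  C (top n i) = INR (5 * 2 ^ i + cost_to_go n k (S i)).
Proof.
  intro Hb. pose proof (cost_to_go_succ_spec n k i i_lt) as Hbudget.
  pose proof (mod_pow2_lt k i). rewrite Hb in Hbudget; cbn [Nat.b2n] in Hbudget.
  assert (Htop : (top n i < nV (ladder n))%nat /\ top n i <> tgt (ladder n))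
    by (cbn; unfold top; lia).
  assert (Hkept : ~ ab (top n i)).
  { apply (run_not_abandoned run (top n i) (S i)); try apply Htop;
      [now apply ladder_edge_top | assumption |].
    cbn. rewrite ladder_cost_down, succ_cost, perceived_INR.
    apply le_INR. lia. }
  destruct (run_next run (top n i) (proj1 Htop) (proj2 Htop) Hkept)
    as [He [_ HC]].
  apply ladder_edge_top in He; [|assumption].
  cbn in HC. rewrite He, ladder_cost_down, succ_cost, <- plus_INR in HC.
  auto.
Qed.

Lemma ladder_bottom_run :
  ~ ab i /\ C i = INR (cost_to_go n k i) /\
  nx i = (if Nat.testbit k i then top n i else S i).
Proof.
  assert (Hi : (i < nV (ladder n))%nat /\ i <> tgt (ladder n)) by (cbn; lia).
  pose proof (cost_to_go_succ_spec n k i i_lt) as Hbudget.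
  pose proof (cost_to_go_spec n k i ltac:(lia)) as Hcost.
  pose proof (mod_pow2_lt k i).
  assert (Hkept : ~ ab i).
  { apply (run_not_abandoned run i (S i)); try apply Hi;
      [apply ladder_edge_bottom; auto | assumption |].
    cbn. rewrite ladder_cost_chain, succ_cost, perceived_INR by assumption.
    apply le_INR. lia. }
  destruct (run_next run i (proj1 Hi) (proj2 Hi) Hkept) as [He [Hnk HC]].
  apply ladder_edge_bottom in He; [|assumption].
  cbn in HC. split; [assumption|].
  destruct (Nat.testbit k i) eqn:Hb; cbn [Nat.b2n] in Hbudget.
  - destruct (ladder_top_run Hb) as [Htk [_ HCt]].
    assert (Hnext : nx i = top n i).
    { destruct He as [He | He]; [|assumption]. exfalso.
      pose proof (run_next_optimal run i (top n i) (proj1 Hi) (proj2 Hi)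
                    Hkept ltac:(apply ladder_edge_bottom; auto) Htk) as Hopt.
      cbn in Hopt. rewrite He, ladder_cost_chain, ladder_cost_up, succ_cost, HCt,
        !perceived_INR in Hopt by assumption.
      apply INR_le in Hopt. lia. }
    rewrite Hnext, ladder_cost_up, HCt, <- plus_INR in HC by assumption.
    split; [rewrite HC; f_equal; lia | assumption].
  - assert (Hnext : nx i = S i).
    { destruct He as [He | He]; [assumption|].
      rewrite He in Hnk. contradiction (ladder_top_abandoned Hb). }
    rewrite Hnext, ladder_cost_chain, succ_cost, <- plus_INR in HC by assumption.
    split; [rewrite HC; f_equal; lia | assumption].
Qed.

End Rung.

Lemma ladder_run_invariant i : (i <= n)%nat ->
  ~ ab i /\ C i = INR (cost_to_go n k i).
Proof.
  intro Hi. remember (n - i)%nat as d eqn:Hd. revert i Hi Hd.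
  induction d as [|d IH]; intros i Hi Hd.
  - replace i with n by lia. destruct run as [Ht [HC _]]. cbn in Ht, HC.
    split; [assumption|]. rewrite HC. unfold cost_to_go.
    now rewrite Nat.mod_small, Nat.sub_diag.
  - destruct (IH (S i) ltac:(lia) ltac:(lia)) as [Hk HC].
    destruct (ladder_bottom_run i ltac:(lia) Hk HC) as [? [? _]]. auto.
Qed.

Lemma ladder_run_next i : (i < n)%nat ->
  nx i = (if Nat.testbit k i then top n i else S i) /\
  (Nat.testbit k i = true -> nx (top n i) = S i).
Proof.
  intro Hi. destruct (ladder_run_invariant (S i) Hi) as [Hk HC]. split.
  - apply (ladder_bottom_run i Hi Hk HC).
  - intro Hb. apply (ladder_top_run i Hi Hk HC Hb).
Qed.

Lemma ladder_path_tops i p : (i <= n)%nat -> follows nx n i p ->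
  forall j, (j < n)%nat -> In (top n j) p <-> (i <= j)%nat /\ Nat.testbit k j = true.
Proof.
  intro Hi. remember (n - i)%nat as d eqn:Hd. revert i p Hi Hd.
  induction d as [|d IH]; intros i p Hi Hd Hf j Hj.
  - replace i with n in Hf by lia.
    inversion Hf as [|u p' Hu]; [|contradiction].
    cbn. unfold top. lia.
  - inversion Hf as [|u p' Hu Hf']; [lia|]. subst u p.
    destruct (ladder_run_next i ltac:(lia)) as [Hnext Hnext_top].
    rewrite Hnext in Hf'.
    destruct (Nat.testbit k i) eqn:Hb.
    + inversion Hf' as [|u p'' Hu' Hf'']; [unfold top in *; lia|]. subst u p'.
      rewrite (Hnext_top eq_refl) in Hf''.
      specialize (IH (S i) p'' ltac:(lia) ltac:(lia) Hf'' j Hj).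
      cbn. rewrite IH. unfold top. split.
      * intros [H | [H | [H1 H2]]]; [lia | | split; [lia | assumption]].
        replace j with i by lia. split; [lia | assumption].
      * intros [H1 H2]. right.
        destruct (Nat.eq_dec i j) as [-> | Hij]; [now left | right; split; [lia | assumption]].
    + specialize (IH (S i) p' ltac:(lia) ltac:(lia) Hf' j Hj).
      cbn. rewrite IH. unfold top. split.
      * intros [H | [H1 H2]]; [lia | split; [lia | assumption]].
      * intros [H1 H2]. right. split; [|assumption].
        destruct (Nat.eq_dec i j) as [-> | Hij]; [congruence | lia].
Qed.

End LadderRun.

Lemma ladder_path_determines_bits n k1 k2 ab1 nx1 C1 ab2 nx2 C2 p :
  (k1 < 2 ^ n)%nat -> (k2 < 2 ^ n)%nat ->
  agent_run (ladder n) (INR 2) (reward n k1) ab1 nx1 C1 ->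
  agent_run (ladder n) (INR 2) (reward n k2) ab2 nx2 C2 ->
  follows nx1 n 0 p -> follows nx2 n 0 p -> k1 = k2.
Proof.
  intros Hk1 Hk2 Hr1 Hr2 Hf1 Hf2.
  apply (testbit_inj_lt n); [assumption | assumption |].
  intros j Hj. apply eq_iff_eq_true.
  pose proof (ladder_path_tops n k1 ab1 nx1 C1 Hk1 Hr1 0 p (Nat.le_0_l n) Hf1 j Hj) as H1.
  pose proof (ladder_path_tops n k2 ab2 nx2 C2 Hk2 Hr2 0 p (Nat.le_0_l n) Hf2 j Hj) as H2.
  assert (Hle0 : forall b : bool, (0 <= j)%nat /\ b = true <-> b = true)
    by (intro; split; [intros [_ ?] | split; [lia |]]; assumption).
  rewrite Hle0 in H1, H2. now rewrite <- H1, <- H2.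
Qed.

Lemma reward_inj n : Injective (reward n).
Proof. intros k1 k2 H. apply INR_eq in H. lia. Qed.

Theorem theorem3 :
  exists K : nat, forall n : nat, (1 <= n)%nat ->
    exists (b : R) (G : instance) (S : list R),
      1 < b /\ well_formed G /\ (nV G <= K * n)%nat /\
      length S = (2 ^ n)%nat /\ NoDup S /\
      (* for every reward in S, the agent reaches t (s is not abandoned) *)
      (forall Rw, In Rw S ->
         forall aband next C, agent_run G b Rw aband next C ->
           ~ aband (src G)) /\
      (* the traversed paths for different rewards are distinct *)
      (forall R1 R2, In R1 S -> In R2 S -> R1 <> R2 ->
         forall ab1 nx1 C1 ab2 nx2 C2 p1 p2,
           agent_run G b R1 ab1 nx1 C1 -> agent_run G b R2 ab2 nx2 C2 ->
           follows nx1 (tgt G) (src G) p1 -> follows nx2 (tgt G) (src G) p2 ->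
           p1 <> p2).
Proof.
  exists 3%nat. intros n Hn.
  exists (INR 2), (ladder n), (map (reward n) (seq 0 (2 ^ n))).
  split; [apply lt_1_INR; lia|].
  split; [apply ladder_well_formed|].
  split; [cbn; lia|].
  split; [now rewrite length_map, length_seq|].
  split; [apply Injective_map_NoDup; [apply reward_inj | apply seq_NoDup]|].
  split.
  - intros Rw HR ab nx C Hr. apply in_map_iff in HR as [k [<- Hk]]. apply in_seq in Hk.
    exact (proj1 (ladder_run_invariant n k ab nx C ltac:(lia) Hr 0 (Nat.le_0_l n))).
  - intros R1 R2 HR1 HR2 Hne ab1 nx1 C1 ab2 nx2 C2 p1 p2 Hr1 Hr2 Hf1 Hf2 <-.
    apply in_map_iff in HR1 as [k1 [<- Hk1]]. apply in_seq in Hk1.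
    apply in_map_iff in HR2 as [k2 [<- Hk2]]. apply in_seq in Hk2.
    apply Hne. f_equal.
    exact (ladder_path_determines_bits n k1 k2 ab1 nx1 C1 ab2 nx2 C2 p1
             ltac:(lia) ltac:(lia) Hr1 Hr2 Hf1 Hf2).
Qed.
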